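(* For every $\varepsilon>0$ there exists a convex polygon $C$ in the plane such that $C$ has a unique minimum-area enclosing rectangle $R_A$ and a unique minimum-perimeter enclosing rectangle $R_P$, and the orientations of $R_A$ and $R_P$ differ by an angle greater than $90^\circ-\varepsilon$.
   Context: For a convex region $C$ in the plane, an enclosing rectangle of $C$ is a rectangle (of arbitrary position and rotation) containing $C$. A minimum-area (resp. minimum-perimeter) enclosing rectangle is an enclosing rectangle of least area (resp. least perimeter) among all enclosing rectangles of $C$. The orientation of a rectangle is the direction of the line containing one of its longer sides. The difference in orientation of two rectangles is the (unsigned) angle in $[0^\circ,90^\circ]$ between these two lines. *)

From Stdlib Require Import Reals List.
Import ListNotations.
Open Scope R_scope.

Definition pt := (R * R)%type.

Definition wsum (w : list R) (P : list pt) : pt :=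
  fold_right (fun (ap : R * pt) (acc : pt) =>
                (fst ap * fst (snd ap) + fst acc, fst ap * snd (snd ap) + snd acc))
             (0, 0) (combine w P).

Definition conv_hull (P : list pt) (x : pt) : Prop :=
  exists w : list R,
    length w = length P /\ Forall (fun a => 0 <= a) w /\
    fold_right Rplus 0 w = 1 /\ x = wsum w P.

Definition dist2 (x y : pt) : R :=
  (fst x - fst y) ^ 2 + (snd x - snd y) ^ 2.

(* A convex polygon: convex hull of finitely many points, with nonempty interior. *)
Definition convex_polygon (P : list pt) : Prop :=
  exists (c : pt) (r : R), 0 < r /\ forall y, dist2 y c < r ^ 2 -> conv_hull P y.

(* A rectangle (arbitrary position and rotation): center, rotation angle theta,
   half side lengths ha (along (cos theta, sin theta)) and hb (along
   (-sin theta, cos theta)), both positive. *)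
Record rect := Rect { rc : pt; rth : R; ha : R; hb : R }.

Definition valid_rect (r : rect) : Prop := 0 < ha r /\ 0 < hb r.

Definition dir_u (r : rect) : pt := (cos (rth r), sin (rth r)).
Definition dir_v (r : rect) : pt := (- sin (rth r), cos (rth r)).

Definition dot (x y : pt) : R := fst x * fst y + snd x * snd y.
Definition sub (x y : pt) : pt := (fst x - fst y, snd x - snd y).

Definition in_rect (r : rect) (x : pt) : Prop :=
  Rabs (dot (sub x (rc r)) (dir_u r)) <= ha r /\
  Rabs (dot (sub x (rc r)) (dir_v r)) <= hb r.

Definition rect_area (r : rect) : R := (2 * ha r) * (2 * hb r).
Definition rect_perimeter (r : rect) : R := 2 * (2 * ha r) + 2 * (2 * hb r).

Definition encloses (r : rect) (C : pt -> Prop) : Prop :=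
  valid_rect r /\ forall x, C x -> in_rect r x.

Definition min_area_rect (C : pt -> Prop) (r : rect) : Prop :=
  encloses r C /\ forall r', encloses r' C -> rect_area r <= rect_area r'.

Definition min_perimeter_rect (C : pt -> Prop) (r : rect) : Prop :=
  encloses r C /\ forall r', encloses r' C -> rect_perimeter r <= rect_perimeter r'.

Definition same_rect (r r' : rect) : Prop := forall x, in_rect r x <-> in_rect r' x.

Definition unique_min_area (C : pt -> Prop) (r : rect) : Prop :=
  min_area_rect C r /\ forall r', min_area_rect C r' -> same_rect r r'.

Definition unique_min_perimeter (C : pt -> Prop) (r : rect) : Prop :=
  min_perimeter_rect C r /\ forall r', min_perimeter_rect C r' -> same_rect r r'.

Definition orientation_dir (r : rect) (d : pt) : Prop :=
  (hb r <= ha r /\ d = dir_u r) \/ (ha r <= hb r /\ d = dir_v r).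

(* unsigned angle in [0, PI/2] between the lines with unit directions d1, d2 *)
Definition line_angle (d1 d2 : pt) : R := acos (Rabs (dot d1 d2)).

From Stdlib Require Import Reals List Lra Psatz.
Import ListNotations.
Open Scope R_scope.

(* The polygon is the centrally symmetric hexagon with vertices
   ±(1, -(1-8s)), ±(1-8s, 1-s), ±(-(1-2s), 1-s), a small perturbation of the
   square [-1,1]^2.  By central symmetry, moving the centre of an enclosing
   rectangle to the origin only shrinks it, so optimal rectangles are centred
   and determined by a unit direction u and the widths of the hexagon along u
   and its normal.  Up to quarter turns u lies in the first quadrant, which
   splits into three sectors (below the direction (2-9s, 8s), up to the
   diagonal, above it).  On each sector two vertices give lower bounds for the
   widths, and a polynomial identity writes the excess of the area (resp.
   perimeter) over its claimed minimum as a quadratic form with nonnegative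
   coefficients in nonnegative quantities; this yields optimality and
   uniqueness at once.  The perimeter is minimised by the axis-parallel box
   [-1,1] x [-(1-s),1-s], whose long side is horizontal, the area by the box
   tilted by atan(8s/(2-9s)), whose long side is nearly vertical; so the
   orientations differ by 90 degrees minus a tilt that vanishes with s. *)

Lemma Rabs_le_bounds x h : Rabs x <= h -> - h <= x <= h.
Proof.
  intros H; split.
  - rewrite <- Rabs_Ropp in H; pose proof (Rle_abs (- x)); lra.
  - pose proof (Rle_abs x); lra.
Qed.

Lemma Rabs_add_le_of_shifts a k h :
  Rabs (a - k) <= h -> Rabs (- a - k) <= h -> Rabs a + Rabs k <= h.
Proof.
  unfold Rabs; destruct (Rcase_abs (a - k)), (Rcase_abs (- a - k)),
    (Rcase_abs a), (Rcase_abs k); lra.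
Qed.

Lemma Rmult_le_compat_eq r1 r2 r3 r4 :
  0 < r1 -> 0 < r3 -> r1 <= r2 -> r3 <= r4 -> r2 * r4 <= r1 * r3 -> r2 = r1 /\ r4 = r3.
Proof.
  intros H1 H3 H12 H34 H.
  assert (r1 * r3 <= r1 * r4) by (apply Rmult_le_compat_l; lra).
  assert (r1 * r4 <= r2 * r4) by (apply Rmult_le_compat_r; lra).
  assert (E4 : r4 = r3) by (apply (Rmult_eq_reg_l r1); lra).
  subst r4; split; [apply (Rmult_eq_reg_r r3); lra | reflexivity].
Qed.

Lemma le_of_sq_le x y : 0 <= y -> x ^ 2 <= y ^ 2 -> x <= y.
Proof. intros Hy H. apply Rsqr_incr_0_var; [unfold Rsqr; lra | exact Hy]. Qed.

Lemma nonneg_of_scaled k z : 0 < k -> 0 <= k * z -> 0 <= z.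
Proof. intros Hk H. apply (Rmult_le_reg_l k); lra. Qed.

Lemma pos_of_scaled k z : 0 < k -> 0 < k * z -> 0 < z.
Proof. intros Hk H. apply (Rmult_lt_reg_l k); lra. Qed.

Definition qform (A B C u v : R) : R := A * u ^ 2 + 2 * B * u * v + C * v ^ 2.

Lemma qform_nonneg A B C u v :
  0 <= A -> 0 <= B -> 0 <= C -> 0 <= u -> 0 <= v -> 0 <= qform A B C u v.
Proof.
  intros HA HB HC Hu Hv; unfold qform.
  assert (0 <= u ^ 2) by apply pow2_ge_0; assert (0 <= v ^ 2) by apply pow2_ge_0.
  assert (0 <= u * v) by (apply Rmult_le_pos; lra).
  nra.
Qed.

Lemma qform_pos A B C u v :
  0 <= A -> 0 <= B -> 0 <= C -> 0 <= u -> 0 <= v ->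
  (0 < A /\ 0 < u) \/ (0 < C /\ 0 < v) -> 0 < qform A B C u v.
Proof.
  intros HA HB HC Hu Hv Hpos; unfold qform.
  assert (0 <= u ^ 2) by apply pow2_ge_0; assert (0 <= v ^ 2) by apply pow2_ge_0.
  assert (0 <= u * v) by (apply Rmult_le_pos; lra).
  destruct Hpos as [[HA' Hu'] | [HC' Hv']].
  - assert (0 < u ^ 2) by (apply pow_lt; lra); nra.
  - assert (0 < v ^ 2) by (apply pow_lt; lra); nra.
Qed.

Lemma atan_le_of_le_tan e z : 0 < e < PI / 2 -> z <= tan e -> atan z <= e.
Proof.
  intros He Hz. rewrite <- (atan_tan e) by lra.
  destruct (Rle_lt_or_eq_dec _ _ Hz) as [Hlt | ->].
  - left; apply atan_increasing, Hlt.
  - right; reflexivity.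
Qed.

Definition vneg (p : pt) : pt := (- fst p, - snd p).
Definition rot (p : pt) : pt := (- snd p, fst p).
Definition vscale (k : R) (p : pt) : pt := (k * fst p, k * snd p).

Lemma dot_vneg_l p u : dot (vneg p) u = - dot p u.
Proof. unfold dot, vneg; cbn; ring. Qed.

Lemma dot_vneg_r p u : dot p (vneg u) = - dot p u.
Proof. unfold dot, vneg; cbn; ring. Qed.

Lemma dot_vscale_r p k u : dot p (vscale k u) = k * dot p u.
Proof. unfold dot, vscale; cbn; ring. Qed.

Lemma dot_sub_l x y u : dot (sub x y) u = dot x u - dot y u.
Proof. unfold dot, sub; cbn; ring. Qed.

Lemma vneg_vneg u : vneg (vneg u) = u.
Proof. destruct u; unfold vneg; cbn; f_equal; ring. Qed.

Lemma rot_vneg u : rot (vneg u) = vneg (rot u).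
Proof. reflexivity. Qed.

Lemma rot_rot u : rot (rot u) = vneg u.
Proof. reflexivity. Qed.

Lemma rot_vscale k u : rot (vscale k u) = vscale k (rot u).
Proof. unfold rot, vscale; cbn; f_equal; ring. Qed.

Lemma dir_u_unit r : fst (dir_u r) ^ 2 + snd (dir_u r) ^ 2 = 1.
Proof. unfold dir_u; cbn. pose proof (sin2_cos2 (rth r)) as H; unfold Rsqr in H; nra. Qed.

Lemma wsum_cons t w p P :
  wsum (t :: w) (p :: P) = (t * fst p + fst (wsum w P), t * snd p + snd (wsum w P)).
Proof. reflexivity. Qed.

Lemma wsum_dot_le P w a M :
  length w = length P -> Forall (fun t => 0 <= t) w ->
  (forall p, In p P -> dot p a <= M) -> dot (wsum w P) a <= M * fold_right Rplus 0 w.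
Proof.
  revert w; induction P as [|p P IH]; intros [|t w] Hlen Hw HP; try discriminate.
  - unfold dot; cbn; lra.
  - injection Hlen as Hlen; inversion_clear Hw as [|? ? Ht Hw'].
    assert (Hp := HP p (or_introl eq_refl)).
    assert (HPw := IH w Hlen Hw' (fun p' Hp' => HP p' (or_intror Hp'))).
    assert (t * dot p a <= t * M) by (apply Rmult_le_compat_l; lra).
    rewrite wsum_cons; unfold dot in *; cbn in *; nra.
Qed.

Lemma hull_dot_le P a M z :
  conv_hull P z -> (forall p, In p P -> dot p a <= M) -> dot z a <= M.
Proof.
  intros (w & Hlen & Hw & Hsum & ->) HP.
  pose proof (wsum_dot_le P w a M Hlen Hw HP) as H; rewrite Hsum in H; lra.
Qed.

Lemma wsum_repeat0 n P : wsum (repeat 0 n) P = (0, 0).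
Proof.
  revert P; induction n as [|n IH]; intros [|p P]; try reflexivity.
  cbn [repeat]; rewrite wsum_cons, IH; cbn; f_equal; ring.
Qed.

Lemma hull_head p P : conv_hull (p :: P) p.
Proof.
  exists (1 :: repeat 0 (length P)); split; [|split; [|split]].
  - cbn; rewrite repeat_length; reflexivity.
  - constructor; [lra|]. apply Forall_forall; intros t Ht.
    apply repeat_spec in Ht; lra.
  - cbn; induction (length P) as [|n IH]; cbn in *; lra.
  - rewrite wsum_cons, wsum_repeat0; destruct p; cbn; f_equal; ring.
Qed.

Lemma hull_cons q P z : conv_hull P z -> conv_hull (q :: P) z.
Proof.
  intros (w & Hlen & Hw & Hsum & ->).
  exists (0 :: w); split; [|split; [|split]].
  - cbn; f_equal; exact Hlen.
  - constructor; [lra | exact Hw].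
  - cbn; lra.
  - rewrite wsum_cons; destruct (wsum w P); cbn; f_equal; ring.
Qed.

Lemma hull_vertex P p : In p P -> conv_hull P p.
Proof.
  induction P as [|q P IH]; [intros []|]; intros [<- | Hp].
  - apply hull_head.
  - apply hull_cons, IH, Hp.
Qed.

Definition symmetrize (Q : list pt) : list pt := Q ++ map vneg Q.

Definition fits_in_box (Q : list pt) (u : pt) (h1 h2 : R) : Prop :=
  forall p, In p Q -> Rabs (dot p u) <= h1 /\ Rabs (dot p (rot u)) <= h2.

Lemma fits_in_box_rot Q u h1 h2 : fits_in_box Q u h1 h2 -> fits_in_box Q (rot u) h2 h1.
Proof.
  intros H p Hp; rewrite rot_rot, dot_vneg_r, Rabs_Ropp.
  destruct (H p Hp); split; assumption.
Qed.

Lemma fits_in_box_scale Q u h1 h2 k :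
  0 <= k -> fits_in_box Q u h1 h2 -> fits_in_box Q (vscale k u) (k * h1) (k * h2).
Proof.
  intros Hk H p Hp.
  rewrite rot_vscale, !dot_vscale_r, !Rabs_mult, (Rabs_right k) by lra.
  destruct (H p Hp); split; apply Rmult_le_compat_l; assumption.
Qed.

Lemma fits_in_box_nonneg Q u h1 h2 : Q <> [] -> fits_in_box Q u h1 h2 -> 0 <= h1 /\ 0 <= h2.
Proof.
  destruct Q as [|p Q]; [contradiction|]; intros _ H.
  destruct (H p (or_introl eq_refl)).
  pose proof (Rabs_pos (dot p u)); pose proof (Rabs_pos (dot p (rot u))); lra.
Qed.

Lemma hull_symmetrize_abs_dot_le Q a h z :
  (forall q, In q Q -> Rabs (dot q a) <= h) -> conv_hull (symmetrize Q) z -> Rabs (dot z a) <= h.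
Proof.
  intros HQ Hz.
  assert (Hsym : forall p, In p (symmetrize Q) -> Rabs (dot p a) <= h).
  { intros p Hp; apply in_app_or in Hp as [Hp | Hp]; [auto|].
    apply in_map_iff in Hp as (q & <- & Hq); rewrite dot_vneg_l, Rabs_Ropp; auto. }
  assert (Hup : dot z a <= h).
  { apply (hull_dot_le _ _ _ _ Hz); intros p Hp.
    apply (Rabs_le_bounds _ _ (Hsym p Hp)). }
  assert (Hlow : dot z (vneg a) <= h).
  { apply (hull_dot_le _ _ _ _ Hz); intros p Hp; rewrite dot_vneg_r.
    pose proof (Rabs_le_bounds _ _ (Hsym p Hp)); lra. }
  rewrite dot_vneg_r in Hlow; apply Rabs_le; lra.
Qed.

Lemma encloses_of_fits_in_box Q r :
  rc r = (0, 0) -> valid_rect r -> fits_in_box Q (dir_u r) (ha r) (hb r) ->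
  encloses r (conv_hull (symmetrize Q)).
Proof.
  intros Hc Hv H; split; [exact Hv|]; intros z Hz.
  unfold in_rect; rewrite Hc, !dot_sub_l.
  replace (dot (0, 0) (dir_u r)) with 0 by (unfold dot; cbn; ring).
  replace (dot (0, 0) (dir_v r)) with 0 by (unfold dot; cbn; ring).
  rewrite !Rminus_0_r.
  split; apply (hull_symmetrize_abs_dot_le Q _ _ z); try exact Hz; intros p Hp; apply (H p Hp).
Qed.

Lemma encloses_fits_in_box Q r :
  encloses r (conv_hull (symmetrize Q)) ->
  fits_in_box Q (dir_u r) (ha r - Rabs (dot (rc r) (dir_u r))) (hb r - Rabs (dot (rc r) (dir_v r))).
Proof.
  intros [_ Hin] p Hp.
  assert (Hpos : In p (symmetrize Q)) by (apply in_or_app; left; exact Hp).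
  assert (Hneg : In (vneg p) (symmetrize Q)) by (apply in_or_app; right; apply in_map, Hp).
  destruct (Hin _ (hull_vertex _ _ Hpos)) as [Hu1 Hv1].
  destruct (Hin _ (hull_vertex _ _ Hneg)) as [Hu2 Hv2].
  rewrite !dot_sub_l, !dot_vneg_l in *.
  pose proof (Rabs_add_le_of_shifts _ _ _ Hu1 Hu2).
  pose proof (Rabs_add_le_of_shifts _ _ _ Hv1 Hv2).
  split; change (rot (dir_u r)) with (dir_v r); lra.
Qed.

Lemma center_eq0 c u :
  fst u ^ 2 + snd u ^ 2 = 1 -> dot c u = 0 -> dot c (rot u) = 0 -> c = (0, 0).
Proof.
  destruct c as [c1 c2], u as [x y]; unfold dot, rot; cbn [fst snd]; intros U E1 E2.
  assert (c1 = x * (c1 * x + c2 * y) - y * (c1 * - y + c2 * x))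
    by (transitivity (c1 * (x ^ 2 + y ^ 2)); [rewrite U | ]; ring).
  assert (c2 = y * (c1 * x + c2 * y) + x * (c1 * - y + c2 * x))
    by (transitivity (c2 * (x ^ 2 + y ^ 2)); [rewrite U | ]; ring).
  rewrite E1, E2 in *; f_equal; lra.
Qed.

Lemma enclosing_box Q r :
  encloses r (conv_hull (symmetrize Q)) ->
  exists k1 k2, 0 <= k1 /\ 0 <= k2 /\ fits_in_box Q (dir_u r) (ha r - k1) (hb r - k2) /\
    (k1 = 0 -> k2 = 0 -> rc r = (0, 0)).
Proof.
  intros H.
  exists (Rabs (dot (rc r) (dir_u r))), (Rabs (dot (rc r) (dir_v r))).
  split; [apply Rabs_pos|]; split; [apply Rabs_pos|].
  split; [exact (encloses_fits_in_box Q r H)|].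
  intros E1 E2; apply (center_eq0 _ (dir_u r) (dir_u_unit r)).
  - destruct (Req_dec (dot (rc r) (dir_u r)) 0) as [|Hne]; [assumption|].
    exfalso; exact (Rabs_no_R0 _ Hne E1).
  - destruct (Req_dec (dot (rc r) (dir_v r)) 0) as [|Hne]; [assumption|].
    exfalso; exact (Rabs_no_R0 _ Hne E2).
Qed.

Definition same_axes (u : pt) (h1 h2 : R) (u' : pt) (h1' h2' : R) : Prop :=
  ((u' = u \/ u' = vneg u) /\ h1' = h1 /\ h2' = h2) \/
  ((u' = rot u \/ u' = vneg (rot u)) /\ h1' = h2 /\ h2' = h1).

Lemma same_axes_rot u h1 h2 u' h1' h2' :
  same_axes u h1 h2 (rot u') h2' h1' -> same_axes u h1 h2 u' h1' h2'.
Proof.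
  assert (Hrot : forall w, rot u' = w -> u' = vneg (rot w)).
  { intros w <-; destruct u'; unfold vneg, rot; cbn; f_equal; ring. }
  unfold same_axes.
  intros [[[E | E] [-> ->]] | [[E | E] [-> ->]]]; apply Hrot in E;
    rewrite ?rot_vneg, ?rot_rot, ?vneg_vneg in E; intuition.
Qed.

Lemma same_rect_of_same_axes r r' :
  rc r' = rc r -> same_axes (dir_u r) (ha r) (hb r) (dir_u r') (ha r') (hb r') -> same_rect r r'.
Proof.
  intros Hc Hax z; unfold in_rect; rewrite Hc.
  change (dir_v r) with (rot (dir_u r)); change (dir_v r') with (rot (dir_u r')).
  destruct Hax as [[[-> | ->] [-> ->]] | [[-> | ->] [-> ->]]];
    rewrite ?rot_vneg, ?rot_rot, ?dot_vneg_r, ?Rabs_Ropp; tauto.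
Qed.

Lemma quadrant_reduction Q (F : pt -> R -> R -> Prop) :
  (forall u h1 h2, F (rot u) h2 h1 -> F u h1 h2) ->
  (forall x y h1 h2, 0 <= x -> 0 <= y -> x ^ 2 + y ^ 2 = 1 ->
     fits_in_box Q (x, y) h1 h2 -> F (x, y) h1 h2) ->
  forall u h1 h2, fst u ^ 2 + snd u ^ 2 = 1 -> fits_in_box Q u h1 h2 -> F u h1 h2.
Proof.
  intros Frot Fquad [x y] h1 h2 U H; cbn in U.
  destruct (Rle_dec 0 x), (Rle_dec 0 y).
  - apply Fquad; assumption.
  - apply Frot; apply (Fquad (- y) x); [lra | lra | nra | exact (fits_in_box_rot _ _ _ _ H)].
  - apply Frot, Frot, Frot.
    assert (H3 := fits_in_box_rot _ _ _ _ (fits_in_box_rot _ _ _ _ (fits_in_box_rot _ _ _ _ H))).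
    replace (rot (rot (rot (x, y)))) with (y, - x) in * by (unfold rot; cbn; f_equal; ring).
    apply Fquad; [lra | lra | nra | exact H3].
  - apply Frot, Frot; apply (Fquad (- x) (- y)); [lra | lra | nra |].
    exact (fits_in_box_rot _ _ _ _ (fits_in_box_rot _ _ _ _ H)).
Qed.

Definition box_monotone (G : R -> R -> R) : Prop :=
  forall h1 h2 h1' h2', 0 <= h1 <= h1' -> 0 <= h2 <= h2' ->
    G h1 h2 <= G h1' h2' /\ (0 < h1 -> 0 < h2 -> G h1' h2' <= G h1 h2 -> h1' = h1 /\ h2' = h2).

Lemma box_monotone_area : box_monotone (fun h1 h2 => (2 * h1) * (2 * h2)).
Proof.
  intros h1 h2 h1' h2' H1 H2; split.
  - assert (h1 * h2 <= h1' * h2') by (apply Rmult_le_compat; lra); lra.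
  - intros P1 P2 Hle; apply Rmult_le_compat_eq; lra.
Qed.

Lemma box_monotone_perimeter : box_monotone (fun h1 h2 => 2 * (2 * h1) + 2 * (2 * h2)).
Proof. intros h1 h2 h1' h2' H1 H2; split; [lra | intros; split; lra]. Qed.

Lemma unique_centred_minimiser Q G r0 :
  Q <> [] -> box_monotone G ->
  rc r0 = (0, 0) -> valid_rect r0 -> fits_in_box Q (dir_u r0) (ha r0) (hb r0) ->
  (forall u h1 h2, fst u ^ 2 + snd u ^ 2 = 1 -> fits_in_box Q u h1 h2 ->
     G (ha r0) (hb r0) <= G h1 h2 /\
     (G h1 h2 <= G (ha r0) (hb r0) -> same_axes (dir_u r0) (ha r0) (hb r0) u h1 h2)) ->
  encloses r0 (conv_hull (symmetrize Q)) /\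
  (forall r, encloses r (conv_hull (symmetrize Q)) -> G (ha r0) (hb r0) <= G (ha r) (hb r)) /\
  (forall r, encloses r (conv_hull (symmetrize Q)) ->
     G (ha r) (hb r) <= G (ha r0) (hb r0) -> same_rect r0 r).
Proof.
  intros HQ HG Hc0 Hv0 Hfit0 Hbound.
  split; [exact (encloses_of_fits_in_box Q r0 Hc0 Hv0 Hfit0)|].
  split; intros r Hr; destruct (enclosing_box Q r Hr) as (k1 & k2 & Hk1 & Hk2 & Hfit & Hcentre);
    destruct (fits_in_box_nonneg _ _ _ _ HQ Hfit) as [H1 H2];
    destruct (Hbound _ _ _ (dir_u_unit r) Hfit) as [Low Eq];
    destruct (HG (ha r - k1) (hb r - k2) (ha r) (hb r)) as [Mono Strict]; try lra.
  intros Hle.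
  assert (Hax : same_axes (dir_u r0) (ha r0) (hb r0) (dir_u r) (ha r - k1) (hb r - k2)) by (apply Eq; lra).
  assert (Hpos : 0 < ha r - k1 /\ 0 < hb r - k2)
    by (destruct Hv0; destruct Hax as [(_ & -> & ->) | (_ & -> & ->)]; lra).
  destruct (Strict (proj1 Hpos) (proj2 Hpos) ltac:(lra)) as [E1 E2].
  assert (k1 = 0) by lra; assert (k2 = 0) by lra; subst k1 k2.
  rewrite !Rminus_0_r in Hax.
  apply same_rect_of_same_axes; [rewrite Hc0; apply Hcentre; reflexivity | exact Hax].
Qed.

Lemma hull_symmetrize_parallelogram o p p' al be :
  Rabs al <= 1 / 2 -> Rabs be <= 1 / 2 ->
  conv_hull (symmetrize [o; p; p']) (al * fst p + be * fst p', al * snd p + be * snd p').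
Proof.
  intros Ha Hb; apply Rabs_le_bounds in Ha, Hb.
  exists [0; 1 / 4 + al / 2; 1 / 4 + be / 2; 0; 1 / 4 - al / 2; 1 / 4 - be / 2].
  split; [reflexivity|]; split; [repeat (apply Forall_cons; [lra|]); apply Forall_nil|].
  split; [cbn; lra|].
  unfold wsum, symmetrize, vneg; cbn; apply injective_projections; cbn; field.
Qed.

Section Hexagon.

Variable s : R.
Hypothesis s_small : 0 < s <= 1 / 1000.

Local Notation d := (8 * s).
Local Notation m := (1 - 8 * s).
Local Notation c := (1 - 2 * s).
Local Notation b := (1 - s).
Local Notation q := (b + m).
(* [N / L] is the least value of [h1 * h2], attained in the direction [(q, d)]. *)
Local Notation N := ((q - m * d) * (c * d + b * q)).
Local Notation L := (q ^ 2 + d ^ 2).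

Definition hex_vertices : list pt := [(1, - m); (1 - d, b); (- c, b)].
Definition hexagon : list pt := symmetrize hex_vertices.

Definition tilt : R := atan (d / q).
Definition area_rect : rect :=
  Rect (0, 0) tilt (cos tilt - m * sin tilt) (c * sin tilt + b * cos tilt).
Definition perimeter_rect : rect := Rect (0, 0) 0 1 b.

Lemma small_powers :
  0 < s ^ 2 <= s / 1000 /\ 0 < s ^ 3 <= s ^ 2 / 1000 /\
  0 < s ^ 4 <= s ^ 3 / 1000 /\ 0 < s ^ 5 <= s ^ 4 / 1000.
Proof.
  destruct s_small.
  assert (0 < s ^ 2 <= s / 1000) by (split; nra).
  assert (0 < s ^ 3 <= s ^ 2 / 1000) by (split; nra).
  assert (0 < s ^ 4 <= s ^ 3 / 1000) by (split; nra).
  assert (0 < s ^ 5 <= s ^ 4 / 1000) by (split; nra).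
  tauto.
Qed.

Ltac small_poly := destruct small_powers as (? & ? & ? & ?); destruct s_small; nra.

Lemma area_sector1 x y :
  0 <= x -> 0 <= y -> x ^ 2 + y ^ 2 = 1 -> q * y <= d * x ->
  N <= L * ((x - m * y) * (c * y + b * x)) /\
  (L * ((x - m * y) * (c * y + b * x)) <= N -> q * y = d * x).
Proof.
  intros Hx Hy U Hl.
  set (A := 16 * s ^ 2 - 72 * s ^ 3 + 448 * s ^ 4).
  set (B := 144 * s ^ 2 - 1424 * s ^ 3 + 6756 * s ^ 4 - 8672 * s ^ 5).
  assert (Id : d ^ 2 * (L * ((x - m * y) * (c * y + b * x)) - N * (x ^ 2 + y ^ 2)) =
               qform A B 0 (d * x - q * y) y) by (unfold qform, A, B; ring).
  rewrite U, Rmult_1_r in Id.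
  assert (HA : 0 < A) by (unfold A; small_poly).
  assert (HB : 0 < B) by (unfold B; small_poly).
  assert (Hd : 0 < d ^ 2) by (apply pow_lt; lra).
  split.
  - enough (0 <= L * ((x - m * y) * (c * y + b * x)) - N) by lra.
    apply (nonneg_of_scaled _ _ Hd); rewrite Id; apply qform_nonneg; lra.
  - intros Hle.
    destruct (Rle_lt_or_eq_dec 0 (d * x - q * y)) as [Hpos | Hzero]; [lra | | lra].
    assert (0 < qform A B 0 (d * x - q * y) y) by (apply qform_pos; lra).
    assert (0 < L * ((x - m * y) * (c * y + b * x)) - N)
      by (apply (pos_of_scaled _ _ Hd); rewrite Id; assumption).
    lra.
Qed.

Lemma area_sector2 x y :
  0 <= y <= x -> x ^ 2 + y ^ 2 = 1 -> d * x < q * y ->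
  N < L * (((1 - d) * x + b * y) * (c * y + b * x)).
Proof.
  intros Hxy U Hl.
  set (B := 8 - 188 * s + 1746 * s ^ 2 - 8043 * s ^ 3 + 17065 * s ^ 4 - 19601 / 2 * s ^ 5).
  set (C := 8 - 160 * s + 1222 * s ^ 2 - 4306 * s ^ 3 + 4811 * s ^ 4).
  assert (Id : (q - d) ^ 2 * (L * (((1 - d) * x + b * y) * (c * y + b * x)) - N * (x ^ 2 + y ^ 2)) =
               qform 0 B C (x - y) (q * y - d * x)) by (unfold qform, B, C; field).
  rewrite U, Rmult_1_r in Id.
  assert (HB : 0 < B) by (unfold B; small_poly).
  assert (HC : 0 < C) by (unfold C; small_poly).
  assert (Hk : 0 < (q - d) ^ 2) by (apply pow_lt; lra).
  enough (0 < L * (((1 - d) * x + b * y) * (c * y + b * x)) - N) by lra.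
  apply (pos_of_scaled _ _ Hk); rewrite Id; apply qform_pos; lra.
Qed.

Lemma area_sector3 x y :
  0 <= x < y -> x ^ 2 + y ^ 2 = 1 ->
  N < L * (((1 - d) * x + b * y) * (y + m * x)).
Proof.
  intros Hxy U.
  set (A := 8 - 200 * s + 1762 * s ^ 2 - 7376 * s ^ 3 + 11336 * s ^ 4).
  set (B := 4 - 70 * s + 483 * s ^ 2 - 2897 / 2 * s ^ 3 + 1028 * s ^ 4).
  set (C := 16 * s ^ 2 - 72 * s ^ 3 + 448 * s ^ 4).
  assert (Id : L * (((1 - d) * x + b * y) * (y + m * x)) - N * (x ^ 2 + y ^ 2) =
               qform A B C x (y - x)) by (unfold qform, A, B, C; field).
  rewrite U, Rmult_1_r in Id.
  assert (0 < A) by (unfold A; small_poly).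
  assert (0 < B) by (unfold B; small_poly).
  assert (0 < C) by (unfold C; small_poly).
  enough (0 < qform A B C x (y - x)) by lra.
  apply qform_pos; lra.
Qed.

Lemma perimeter_sector1 x y :
  0 <= x -> 0 <= y -> x ^ 2 + y ^ 2 = 1 -> q * y <= d * x ->
  1 + b <= (x - m * y) + (c * y + b * x) /\
  ((x - m * y) + (c * y + b * x) <= 1 + b -> y = 0).
Proof.
  intros Hx Hy U Hl.
  set (B := 96 * s ^ 2 - 48 * s ^ 3).
  set (C := 128 * s ^ 2 - 1664 * s ^ 3 + 3104 * s ^ 4).
  assert (Id : d ^ 2 * (((x - m * y) + (c * y + b * x)) ^ 2 - (1 + b) ^ 2 * (x ^ 2 + y ^ 2)) =
               qform 0 B C (d * x - q * y) y) by (unfold qform, B, C; ring).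
  rewrite U, Rmult_1_r in Id.
  assert (HB : 0 < B) by (unfold B; small_poly).
  assert (HC : 0 < C) by (unfold C; small_poly).
  assert (Hd : 0 < d ^ 2) by (apply pow_lt; lra).
  assert (Hge : 1 + b <= (x - m * y) + (c * y + b * x)).
  { apply le_of_sq_le; [nra|].
    enough (0 <= ((x - m * y) + (c * y + b * x)) ^ 2 - (1 + b) ^ 2) by lra.
    apply (nonneg_of_scaled _ _ Hd); rewrite Id; apply qform_nonneg; lra. }
  split; [exact Hge|]; intros Hle.
  destruct (Rle_lt_or_eq_dec 0 y) as [Hpos | Hzero]; [lra | | lra].
  assert (0 < qform 0 B C (d * x - q * y) y) by (apply qform_pos; lra).
  replace ((x - m * y) + (c * y + b * x)) with (1 + b) in Id by lra.
  lra.
Qed.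

Lemma perimeter_sector2 x y :
  0 <= y <= x -> x ^ 2 + y ^ 2 = 1 -> d * x < q * y ->
  1 + b < ((1 - d) * x + b * y) + (c * y + b * x).
Proof.
  intros Hxy U Hl.
  set (A := 128 * s ^ 2 - 1664 * s ^ 3 + 3104 * s ^ 4).
  set (B := 8 - 116 * s + 462 * s ^ 2 - 683 * s ^ 3).
  set (C := 8 - 88 * s + 142 * s ^ 2).
  assert (Id : (q - d) ^ 2 *
                 ((((1 - d) * x + b * y) + (c * y + b * x)) ^ 2 - (1 + b) ^ 2 * (x ^ 2 + y ^ 2)) =
               qform A B C (x - y) (q * y - d * x)) by (unfold qform, A, B, C; ring).
  rewrite U, Rmult_1_r in Id.
  assert (0 < A) by (unfold A; small_poly).
  assert (0 < B) by (unfold B; small_poly).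
  assert (0 < C) by (unfold C; small_poly).
  assert (Hk : 0 < (q - d) ^ 2) by (apply pow_lt; lra).
  assert (0 < (((1 - d) * x + b * y) + (c * y + b * x)) ^ 2 - (1 + b) ^ 2).
  { apply (pos_of_scaled _ _ Hk); rewrite Id; apply qform_pos; lra. }
  destruct (Rlt_or_le (1 + b) (((1 - d) * x + b * y) + (c * y + b * x))) as [|Hle]; [assumption|].
  assert ((((1 - d) * x + b * y) + (c * y + b * x)) ^ 2 <= (1 + b) ^ 2) by (apply pow_incr; nra).
  lra.
Qed.

Lemma perimeter_sector3 x y :
  0 <= x < y -> x ^ 2 + y ^ 2 = 1 ->
  1 + b <= ((1 - d) * x + b * y) + (y + m * x) /\
  (((1 - d) * x + b * y) + (y + m * x) <= 1 + b -> x = 0).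
Proof.
  intros Hxy U.
  set (A := 8 - 128 * s + 287 * s ^ 2).
  set (B := 4 - 34 * s + 16 * s ^ 2).
  assert (Id : (((1 - d) * x + b * y) + (y + m * x)) ^ 2 - (1 + b) ^ 2 * (x ^ 2 + y ^ 2) =
               qform A B 0 x (y - x)) by (unfold qform, A, B; ring).
  rewrite U, Rmult_1_r in Id.
  assert (0 < A) by (unfold A; small_poly).
  assert (0 < B) by (unfold B; small_poly).
  assert (Hge : 1 + b <= ((1 - d) * x + b * y) + (y + m * x)).
  { apply le_of_sq_le; [nra|].
    assert (0 <= qform A B 0 x (y - x)) by (apply qform_nonneg; lra).
    lra. }
  split; [exact Hge|]; intros Hle.
  destruct (Rle_lt_or_eq_dec 0 x) as [Hpos | Hzero]; [lra | | lra].
  assert (0 < qform A B 0 x (y - x)) by (apply qform_pos; lra).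
  replace (((1 - d) * x + b * y) + (y + m * x)) with (1 + b) in Id by lra.
  lra.
Qed.

Lemma hex_box_bounds x y h1 h2 :
  fits_in_box hex_vertices (x, y) h1 h2 ->
  x - m * y <= h1 /\ (1 - d) * x + b * y <= h1 /\ y + m * x <= h2 /\ c * y + b * x <= h2.
Proof.
  intros H.
  destruct (H _ (or_introl eq_refl)) as [A1 B1].
  destruct (H _ (or_intror (or_introl eq_refl))) as [A2 _].
  destruct (H _ (or_intror (or_intror (or_introl eq_refl)))) as [_ B3].
  apply Rabs_le_bounds in A1, B1, A2, B3.
  unfold dot, rot in *; cbn [fst snd] in *.
  repeat split; lra.
Qed.

Lemma area_quadrant x y h1 h2 :
  0 <= x -> 0 <= y -> x ^ 2 + y ^ 2 = 1 -> fits_in_box hex_vertices (x, y) h1 h2 ->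
  N <= L * (h1 * h2) /\
  (L * (h1 * h2) <= N -> q * y = d * x /\ h1 = x - m * y /\ h2 = c * y + b * x).
Proof.
  intros Hx Hy U H.
  destruct (hex_box_bounds x y h1 h2 H) as (Hv1 & Hv2 & Hw1 & Hw3).
  destruct s_small.
  assert (HL : 0 < L) by nra.
  assert (0 <= c * y + b * x) by nra.
  assert (0 <= (1 - d) * x + b * y) by nra.
  destruct (Rle_dec (q * y) (d * x)) as [Hl | Hl].
  - assert (0 <= x - m * y) by nra.
    destruct (area_sector1 x y Hx Hy U Hl) as [Low Eq].
    assert ((x - m * y) * (c * y + b * x) <= h1 * h2) by (apply Rmult_le_compat; lra).
    split; [nra|]; intros Hle.
    assert (Hdir : q * y = d * x) by (apply Eq; nra).
    assert (0 < x) by nra.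
    destruct (Rmult_le_compat_eq (x - m * y) h1 (c * y + b * x) h2); [nra | nra | lra | lra | nra |].
    auto.
  - destruct (Rle_dec y x).
    + assert (Low := area_sector2 x y ltac:(lra) U ltac:(lra)).
      assert (((1 - d) * x + b * y) * (c * y + b * x) <= h1 * h2) by (apply Rmult_le_compat; lra).
      split; intros; nra.
    + assert (Low := area_sector3 x y ltac:(lra) U).
      assert (((1 - d) * x + b * y) * (y + m * x) <= h1 * h2) by (apply Rmult_le_compat; nra).
      split; intros; nra.
Qed.

Lemma perimeter_quadrant x y h1 h2 :
  0 <= x -> 0 <= y -> x ^ 2 + y ^ 2 = 1 -> fits_in_box hex_vertices (x, y) h1 h2 ->
  1 + b <= h1 + h2 /\
  (h1 + h2 <= 1 + b ->
   (x = 1 /\ y = 0 /\ h1 = 1 /\ h2 = b) \/ (x = 0 /\ y = 1 /\ h1 = b /\ h2 = 1)).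
Proof.
  intros Hx Hy U H.
  destruct (hex_box_bounds x y h1 h2 H) as (Hv1 & Hv2 & Hw1 & Hw3).
  destruct (Rle_dec (q * y) (d * x)) as [Hl | Hl].
  - destruct (perimeter_sector1 x y Hx Hy U Hl) as [Low Eq].
    split; [lra|]; intros Hle.
    assert (y = 0) by (apply Eq; lra); subst y.
    assert (x = 1) by nra; subst x.
    left; repeat split; lra.
  - destruct (Rle_dec y x).
    + assert (Low := perimeter_sector2 x y ltac:(lra) U ltac:(lra)).
      split; intros; lra.
    + destruct (perimeter_sector3 x y ltac:(lra) U) as [Low Eq].
      split; [lra|]; intros Hle.
      assert (x = 0) by (apply Eq; lra); subst x.
      assert (y = 1) by nra; subst y.
      right; repeat split; lra.
Qed.

Lemma tilt_bounds : 0 < tilt < PI / 2.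
Proof.
  destruct s_small; unfold tilt.
  assert (0 < d / q) by (apply Rdiv_lt_0_compat; lra).
  split; [rewrite <- atan_0; apply atan_increasing; assumption|].
  pose proof (atan_bound (d / q)); lra.
Qed.

Lemma tilt_dir : 0 < cos tilt /\ q * sin tilt = d * cos tilt.
Proof.
  destruct s_small; pose proof tilt_bounds.
  assert (Hcos : 0 < cos tilt) by (apply cos_gt_0; lra).
  split; [exact Hcos|].
  assert (Htan := tan_atan (d / q)); fold tilt in Htan; unfold tan in Htan.
  replace (sin tilt) with (sin tilt / cos tilt * cos tilt) by (field; lra).
  rewrite Htan; field; lra.
Qed.

Lemma tilt_dir_unique x y :
  0 <= x -> x ^ 2 + y ^ 2 = 1 -> q * y = d * x -> x = cos tilt /\ y = sin tilt.
Proof.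
  intros Hx U E; destruct tilt_dir as [Hcos Et]; destruct s_small.
  pose proof (sin2_cos2 tilt) as Ut; unfold Rsqr in Ut.
  assert (Ex : x ^ 2 * L = q ^ 2).
  { replace (x ^ 2 * L) with (q ^ 2 * x ^ 2 + (d * x) ^ 2) by ring.
    rewrite <- E; transitivity (q ^ 2 * (x ^ 2 + y ^ 2)); [ring | rewrite U; ring]. }
  assert (Ec : cos tilt ^ 2 * L = q ^ 2).
  { replace (cos tilt ^ 2 * L) with (q ^ 2 * cos tilt ^ 2 + (d * cos tilt) ^ 2) by ring.
    rewrite <- Et; transitivity (q ^ 2 * (sin tilt * sin tilt + cos tilt * cos tilt)); [ring | rewrite Ut; ring]. }
  assert (x = cos tilt) by nra; subst x.
  split; [reflexivity | apply (Rmult_eq_reg_l q); lra].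
Qed.

Lemma hex_fits_tilted_box : fits_in_box hex_vertices (q, d) (q - m * d) (c * d + b * q).
Proof.
  destruct s_small; intros p [<- | [<- | [<- | []]]];
    unfold dot, rot; cbn [fst snd]; split; apply Rabs_le; split; nra.
Qed.

Lemma area_rect_scaled :
  exists k, 0 < k /\ k ^ 2 * L = 1 /\ dir_u area_rect = vscale k (q, d) /\
    ha area_rect = k * (q - m * d) /\ hb area_rect = k * (c * d + b * q).
Proof.
  destruct tilt_dir as [Hcos Et]; destruct s_small.
  pose proof (sin2_cos2 tilt) as Ut; unfold Rsqr in Ut.
  assert (Hsin : sin tilt = cos tilt / q * d) by (apply (Rmult_eq_reg_l q); [rewrite Et; field|]; lra).
  exists (cos tilt / q); unfold area_rect, dir_u, vscale; cbn [rc rth ha hb fst snd].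
  repeat split.
  - apply Rdiv_lt_0_compat; lra.
  - replace ((cos tilt / q) ^ 2 * L) with (((q * cos tilt) ^ 2 + (d * cos tilt) ^ 2) / q ^ 2)
      by (field; lra).
    rewrite <- Et.
    replace ((q * cos tilt) ^ 2 + (q * sin tilt) ^ 2) with (q ^ 2 * (sin tilt * sin tilt + cos tilt * cos tilt))
      by ring.
    rewrite Ut; field; lra.
  - f_equal; [field; lra | exact Hsin].
  - rewrite Hsin; field; lra.
  - rewrite Hsin; field; lra.
Qed.

Lemma area_rect_fits : fits_in_box hex_vertices (dir_u area_rect) (ha area_rect) (hb area_rect).
Proof.
  destruct area_rect_scaled as (k & Hk & _ & -> & -> & ->).
  apply fits_in_box_scale; [lra | exact hex_fits_tilted_box].
Qed.

Lemma area_rect_sides : L * (ha area_rect * hb area_rect) = N /\ 0 < ha area_rect < hb area_rect.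
Proof.
  destruct area_rect_scaled as (k & Hk & HkL & _ & -> & ->); destruct s_small.
  split; [|split].
  - transitivity (k ^ 2 * L * N); [ring | rewrite HkL; ring].
  - apply Rmult_lt_0_compat; nra.
  - apply Rmult_lt_compat_l; nra.
Qed.

Lemma area_lower_bound u h1 h2 :
  fst u ^ 2 + snd u ^ 2 = 1 -> fits_in_box hex_vertices u h1 h2 ->
  N <= L * (h1 * h2) /\
  (L * (h1 * h2) <= N -> same_axes (dir_u area_rect) (ha area_rect) (hb area_rect) u h1 h2).
Proof.
  intros U H; pattern u, h1, h2; revert u h1 h2 U H.
  apply quadrant_reduction; cbn beta.
  - intros v k1 k2 [Low Eq]; rewrite (Rmult_comm k1 k2).
    split; [exact Low|]; intros Hle; apply same_axes_rot, Eq, Hle.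
  - intros x y k1 k2 Hx Hy U H.
    destruct (area_quadrant x y k1 k2 Hx Hy U H) as [Low Eq].
    split; [exact Low|]; intros Hle.
    destruct (Eq Hle) as (Hdir & -> & ->).
    destruct (tilt_dir_unique x y Hx U Hdir) as [-> ->].
    left; split; [left | split]; reflexivity.
Qed.

Lemma perimeter_lower_bound u h1 h2 :
  fst u ^ 2 + snd u ^ 2 = 1 -> fits_in_box hex_vertices u h1 h2 ->
  1 + b <= h1 + h2 /\ (h1 + h2 <= 1 + b -> same_axes (1, 0) 1 b u h1 h2).
Proof.
  intros U H; pattern u, h1, h2; revert u h1 h2 U H.
  apply quadrant_reduction; cbn beta.
  - intros v k1 k2 [Low Eq]; split; [lra|]; intros Hle; apply same_axes_rot, Eq; lra.
  - intros x y k1 k2 Hx Hy U H.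
    destruct (perimeter_quadrant x y k1 k2 Hx Hy U H) as [Low Eq].
    split; [exact Low|]; intros Hle.
    destruct (Eq Hle) as [(-> & -> & -> & ->) | (-> & -> & -> & ->)].
    + left; split; [left | split]; reflexivity.
    + right; split; [left; unfold rot; cbn; f_equal; ring | split; reflexivity].
Qed.

Lemma area_rect_unique : unique_min_area (conv_hull hexagon) area_rect.
Proof.
  destruct area_rect_sides as (Harea & Hha & Hlong); destruct s_small.
  assert (HL : 0 < L) by nra.
  destruct (unique_centred_minimiser hex_vertices _ area_rect ltac:(discriminate) box_monotone_area)
    as (Henc & Hmin & Huniq); try reflexivity.
  - split; cbn -[ha hb] in *; lra.
  - exact area_rect_fits.
  - intros u h1 h2 U Hfit; destruct (area_lower_bound u h1 h2 U Hfit) as [Low Eq].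
    split; [nra|]; intros Hle; apply Eq; nra.
  - split; [split; assumption|].
    intros r [Hr Hle]; exact (Huniq r Hr (Hle _ Henc)).
Qed.

Lemma perimeter_rect_unique : unique_min_perimeter (conv_hull hexagon) perimeter_rect.
Proof.
  destruct s_small.
  destruct (unique_centred_minimiser hex_vertices _ perimeter_rect ltac:(discriminate)
              box_monotone_perimeter) as (Henc & Hmin & Huniq); try reflexivity.
  - split; cbn; lra.
  - unfold perimeter_rect, dir_u; cbn [rth ha hb]; rewrite cos_0, sin_0.
    intros p [<- | [<- | [<- | []]]]; unfold dot, rot; cbn [fst snd];
      split; apply Rabs_le; split; lra.
  - intros u h1 h2 U Hfit; destruct (perimeter_lower_bound u h1 h2 U Hfit) as [Low Eq].
    unfold perimeter_rect, dir_u; cbn [rth ha hb]; rewrite cos_0, sin_0.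
    split; [lra|]; intros Hle; apply Eq; lra.
  - split; [split; assumption|].
    intros r [Hr Hle]; exact (Huniq r Hr (Hle _ Henc)).
Qed.

Lemma hexagon_convex : convex_polygon hexagon.
Proof.
  destruct s_small; exists (0, 0), (1 / 4); split; [lra|].
  intros [z1 z2] Hz; unfold dist2 in Hz; cbn [fst snd] in Hz.
  assert (-1 / 4 < z1 < 1 / 4) by (split; nra).
  assert (-1 / 4 < z2 < 1 / 4) by (split; nra).
  (* Cramer's rule in the basis (1 - d, b), (- c, b) of determinant D. *)
  set (D := b * (1 - d + c)).
  assert (HD : 1 < D) by (unfold D; nra).
  replace (z1, z2) with
    ((b * z1 + c * z2) / D * fst (1 - d, b) + ((1 - d) * z2 - b * z1) / D * fst (- c, b),
     (b * z1 + c * z2) / D * snd (1 - d, b) + ((1 - d) * z2 - b * z1) / D * snd (- c, b))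
    by (cbn [fst snd]; unfold D; f_equal; field; nra).
  apply hull_symmetrize_parallelogram; apply Rabs_le;
    split; (apply Rmult_le_reg_r with D; [lra|]); unfold Rdiv;
    rewrite Rmult_assoc, Rinv_l, Rmult_1_r by lra; unfold D; nra.
Qed.

Lemma orientation_angle dA dP :
  orientation_dir area_rect dA -> orientation_dir perimeter_rect dP ->
  line_angle dA dP = PI / 2 - tilt.
Proof.
  destruct area_rect_sides as (_ & _ & Hlong); destruct s_small; pose proof tilt_bounds.
  intros [[HA _] | [_ ->]] [[_ ->] | [HP _]]; cbn [ha hb perimeter_rect] in *; try lra.
  unfold line_angle, dot, dir_u, dir_v; cbn; rewrite cos_0, sin_0.
  replace (- sin tilt * 1 + cos tilt * 0) with (- sin tilt) by ring.
  assert (0 < sin tilt) by (apply sin_gt_0; lra).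
  rewrite Rabs_Ropp, Rabs_right, <- cos_shift, acos_cos; lra.
Qed.

Lemma tilt_lt : tilt < atan d.
Proof.
  destruct s_small; apply atan_increasing.
  apply (Rmult_lt_reg_r q); [lra|]; unfold Rdiv; rewrite Rmult_assoc, Rinv_l by lra; nra.
Qed.

End Hexagon.

Theorem mainTheorem1 :
  forall eps : R, 0 < eps ->
  exists P : list pt,
    convex_polygon P /\
    exists RA RP : rect,
      unique_min_area (conv_hull P) RA /\
      unique_min_perimeter (conv_hull P) RP /\
      forall dA dP : pt,
        orientation_dir RA dA -> orientation_dir RP dP ->
        line_angle dA dP > PI / 2 - eps.
Proof.
  intros eps Heps.
  set (e := Rmin eps 1).
  assert (He : 0 < e < PI / 2)
    by (pose proof PI2_1; unfold e; split; [apply Rmin_glb_lt | apply Rle_lt_trans with 1; [apply Rmin_r|]]; lra).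
  assert (Htan : 0 < tan e) by (apply tan_gt_0; lra).
  set (s := Rmin (1 / 1000) (tan e / 8)).
  assert (Hs : 0 < s <= 1 / 1000)
    by (unfold s; split; [apply Rmin_glb_lt | apply Rmin_l]; lra).
  assert (Hatan : atan (8 * s) <= eps).
  { apply Rle_trans with e; [apply atan_le_of_le_tan; [exact He|] | apply Rmin_l].
    assert (s <= tan e / 8) by apply Rmin_r; lra. }
  exists (hexagon s); split; [exact (hexagon_convex s Hs)|].
  exists (area_rect s), (perimeter_rect s).
  split; [exact (area_rect_unique s Hs)|].
  split; [exact (perimeter_rect_unique s Hs)|].
  intros dA dP HA HP.
  rewrite (orientation_angle s Hs dA dP HA HP).
  pose proof (tilt_lt s Hs); lra.
Qed.
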